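(* Consider the system model in the context with a line-of-sight-only channel $\mathbf{h}_k=\alpha_k\mathbf{a}(\theta_k)$, where $\alpha_k\in\mathbb{C}\setminus\{0\}$ and $\theta_k\in[0,2\pi)$. For $\phi\in[-\pi,\pi)$ let $\gamma(\alpha_k\mathbf{a}(\phi),\mathbf{F}_k,\mathbf{y}_k)$ be the SINR function defined in the context. Then the function $\phi\mapsto\gamma(\alpha_k\mathbf{a}(\phi),\mathbf{F}_k,\mathbf{y}_k)$ attains its maximum over $[-\pi,\pi)$, and every global maximizer $$\phi^\star\in\arg\max_{\phi\in[-\pi,\pi)}\gamma(\alpha_k\mathbf{a}(\phi),\mathbf{F}_k,\mathbf{y}_k)$$ satisfies $\mathbf{a}(\phi^\star)=\mathbf{a}(\theta_k)$.
   Context: Let $N\ge 2$, $p_{\rm t}>0$, $\sigma^2>0$, and fix $k\in\{1,\dots,N\}$. The array response vector is $\mathbf{a}(\theta)=(1,e^{j\pi\sin\theta},\dots,e^{j\pi(N-1)\sin\theta})^{\mathsf T}\in\mathbb{C}^N$. $\mathbf{U}_N$ is the normalized DFT matrix, $\mathbf{U}_N(a,b)=\frac{1}{\sqrt N}e^{-j2\pi(a-1)(b-1)/N}$; $\mathbf{C}_N(i,k)=((i-k)\bmod N)+1$; and for $k'\in\{1,\dots,N\}$, $\mathbf{F}_{k'}$ is the matrix whose $n$-th column $\mathbf{p}_{[n,k']}$ is the $\mathbf{C}_N(n,k')$-th column of $\mathbf{U}_N$. For $n\in\{1,\dots,N\}$, $\mathbf{P}_n$ is the matrix whose $k'$-th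 column is $\mathbf{p}_{[n,k']}$. A symbol vector $\mathbf{s}\in\mathbb{C}^N$ with $\mathbb{E}[\mathbf{s}\mathbf{s}^{\mathsf H}]=\mathbf{I}_N$ is sent with $\mathbf{x}_n=\frac{1}{\sqrt N}\mathbf{P}_n\mathbf{s}$; device $k$ receives $\mathbf{y}_k=(y_{[1,k]},\dots,y_{[N,k]})^{\mathsf T}$ with $y_{[n,k]}=\sqrt{p_{\rm t}}\mathbf{h}_k^{\mathsf H}\mathbf{x}_n+z_{[n,k]}$, so that $\mathbf{y}_k=\sqrt{p_{\rm t}/N}\sum_{k'=1}^N\mathbf{s}(k')\mathbf{F}_{k'}^{\mathsf T}\mathbf{h}_k^{*}+\mathbf{z}_k$, where $\mathbf{z}_k$ is independent of $\mathbf{s}$, zero mean, with $\mathbb{E}[\mathbf{z}_k\mathbf{z}_k^{\mathsf H}]=\sigma^2\mathbf{I}_N$. For a candidate channel $\mathbf{h}\in\mathbb{C}^N$ with all entries nonzero, let $\tilde{\mathbf{h}}=\mathbf{1}_N\oslash(\mathbf{h}^* )$ (entrywise division), $g(\mathbf{h})=\tilde{\mathbf{h}}^{\mathsf T}\mathbf{F}_k^*\mathbf{F}_k^{\mathsf T}\mathbf{h}_k^*$, $v_{k'}(\mathbf{h})=\tilde{\mathbf{h}}^{\mathsf T}\mathbf{F}_k^*\mathbf{F}_{k'}^{\mathsf T}\mathbf{h}_k^*$, so that the combined signal $\tilde{\mathbf{h}}^{\mathsf T}\mathbf{F}_k^*\mathbf{y}_k=P+I$ with $P=\sqrt{p_{\rm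 t}/N}\,\mathbf{s}(k)g(\mathbf{h})$ and $I=\sqrt{p_{\rm t}/N}\sum_{k'\neq k}\mathbf{s}(k')v_{k'}(\mathbf{h})+\tilde{\mathbf{h}}^{\mathsf T}\mathbf{F}_k^*\mathbf{z}_k$. The SINR is $\gamma(\mathbf{h},\mathbf{F}_k,\mathbf{y}_k)=\mathbb{E}[|P|^2]/\mathbb{E}[|I|^2]$, expectations over $\mathbf{s}$ and $\mathbf{z}_k$. *)

(* R : realType (mathcomp-analysis trigo), complex numbers
   R[i] from mathcomp-real-closed.  All indices are 0-based: the paper's
   index n in {1..N} is our n-1 in 'I_N. *)
From mathcomp Require Import all_boot all_algebra.
From mathcomp Require Import reals trigo.
From mathcomp Require Import complex.
Set Implicit Arguments. Unset Strict Implicit. Unset Printing Implicit Defensive.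
Import GRing.Theory Num.Theory.
Local Open Scope ring_scope.
Local Open Scope complex_scope.

Section Model.
Variable R : realType.
Local Notation C := R[i].

Definition expj (x : R) : C := cos x +i* sin x.

Definition cconj m n (A : 'M[C]_(m, n)) : 'M[C]_(m, n) := map_mx (fun x => x^*) A.

Variable N : nat.

Definition steer (th : R) : 'cV[C]_N :=
  \col_(n < N) expj (pi * n%:R * sin th).

Definition dft_entry (a b : nat) : C :=
  ((Num.sqrt (N%:R : R))^-1)%:C * expj (- (2 * pi * (a * b)%:R / N%:R)).

(* 0-based version of C_N(i,k) = ((i-k) mod N) + 1 : column index (i-k) mod N *)
Definition cidx (i k : nat) : nat := ((i + N - k) %% N)%N.

Definition pvec (n k' : nat) : 'cV[C]_N := \col_(a < N) dft_entry a (cidx n k').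

Definition Fmat (k' : 'I_N) : 'M[C]_N := \matrix_(a < N, n < N) pvec n k' a 0.

Definition Pmat (n : 'I_N) : 'M[C]_N := \matrix_(a < N, k' < N) pvec n k' a 0.

Variables (k : 'I_N) (pt : R).

Definition htil (h : 'cV[C]_N) : 'cV[C]_N := \col_(a < N) (h a 0)^*^-1.

Definition gval (h hk : 'cV[C]_N) : C :=
  ((htil h)^T *m cconj (Fmat k) *m (Fmat k)^T *m cconj hk) 0 0.

Definition vval (h hk : 'cV[C]_N) (k' : 'I_N) : C :=
  ((htil h)^T *m cconj (Fmat k) *m (Fmat k')^T *m cconj hk) 0 0.

Definition wrow (h : 'cV[C]_N) : 'rV[C]_N := (htil h)^T *m cconj (Fmat k).

(* E|P|^2 where P = sqrt(pt/N) s(k) g(h), for a symbol vector with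
   second-moment matrix E[s s^H] = Cs :  (pt/N) g Cs(k,k) g^* *)
Definition powP (Cs : 'M[C]_N) (h hk : 'cV[C]_N) : R :=
  complex.Re (((pt / N%:R)%:C) * (gval h hk * Cs k k * (gval h hk)^*)).

(* E|I|^2 where I = sqrt(pt/N) sum_{k'<>k} s(k') v_{k'}(h) + w z, with
   E[s s^H] = Cs, E[z z^H] = Cz, z independent of s and zero mean
   (so the cross terms vanish):
   (pt/N) sum_{k1,k2 <> k} v_{k1} Cs(k1,k2) v_{k2}^*  +  w Cz w^H *)
Definition powI (Cs Cz : 'M[C]_N) (h hk : 'cV[C]_N) : R :=
  complex.Re (((pt / N%:R)%:C) *
      (\sum_(k1 < N | k1 != k) \sum_(k2 < N | k2 != k)
          vval h hk k1 * Cs k1 k2 * (vval h hk k2)^*)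
    + (wrow h *m Cz *m (cconj (wrow h))^T) 0 0).

Variable sigma2 : R.

(* SINR gamma(h, F_k, y_k) = E|P|^2 / E|I|^2 with E[s s^H] = I_N and
   E[z_k z_k^H] = sigma^2 I_N *)
Definition sinr (h hk : 'cV[C]_N) : R :=
  powP 1%:M h hk / powI 1%:M (sigma2%:C)%:M h hk.

End Model.

(* Since F_k^* F_k^T = I, the useful gain g of the combiner reduces to the inner
   product a(theta_k)^H a(phi) of two steering vectors: a sum of N unimodular
   terms whose first term is 1, so |g| <= N with equality exactly when
   a(phi) = a(theta_k).  The noise power sigma^2 sum_n |1/h_n|^2 = sigma^2 N / |alpha|^2
   does not depend on phi, and the interference power is nonnegative; it vanishes
   for a(phi) = a(theta_k) because F_k^* F_k'^T is diagonal with entries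
   (w^n)^k (conj w^n)^k' for the DFT root w, which sum to zero over n when k' <> k.
   So the SINR is maximal exactly at the beams with a(phi) = a(theta_k), and one
   of them lies in [-pi, pi) by 2pi-periodicity of sin. *)

From mathcomp Require Import all_boot all_order all_algebra.
From mathcomp Require Import reals trigo.
From mathcomp Require Import complex.
From mathcomp Require Import ring lra.

Set Implicit Arguments.
Unset Strict Implicit.
Unset Printing Implicit Defensive.

Import Order.TTheory GRing.Theory Num.Theory.
Local Open Scope ring_scope.

Section RatioBound.
Variables (R : realFieldType) (p K : R).
Hypotheses (p_gt0 : 0 < p) (K_gt0 : 0 < K).

Lemma ratio_le_max (S G M : R) : 0 <= S -> G <= M -> 0 <= M ->
  p * G / (p * S + K) <= p * M / K.
Proof.
move=> S_ge0 GM M_ge0; have den_gt0 : 0 < p * S + K by rewrite ltr_wpDl // mulr_ge0 // ltW.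
have pMpS_ge0 : 0 <= p * M * (p * S) by rewrite !mulr_ge0 // ltW.
rewrite ler_pdivrMr // mulrAC ler_pdivlMr // mulrDr.
by apply: ler_wpDl pMpS_ge0 _; rewrite ler_pM2r // ler_pM2l.
Qed.

Lemma ratio_eq_max (S G M : R) : 0 <= S -> G <= M -> 0 <= M ->
  p * M / K <= p * G / (p * S + K) -> G = M.
Proof.
move=> S_ge0 GM M_ge0; have den_gt0 : 0 < p * S + K by rewrite ltr_wpDl // mulr_ge0 // ltW.
have pMpS_ge0 : 0 <= p * M * (p * S) by rewrite !mulr_ge0 // ltW.
rewrite ler_pdivlMr // mulrAC ler_pdivrMr // mulrDr => le_MG.
apply/eqP; rewrite eq_le GM /= -(ler_pM2l p_gt0) -(ler_pM2r K_gt0).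
exact: le_trans (ler_wpDl pMpS_ge0 (lexx _)) le_MG.
Qed.

End RatioBound.

Lemma sum_unity_root_expr (R : idomainType) n (w : R) : w ^+ n = 1 ->
  \sum_(i < n) w ^+ i = if w == 1 then n%:R else 0.
Proof.
move=> wn1; have [->|w_neq1] := eqVneq w 1.
  by under eq_bigr do rewrite expr1n; rewrite sumr_const card_ord.
apply/eqP; have := subrX1 w n; rewrite wn1 subrr => /esym/eqP.
by rewrite mulf_eq0 subr_eq0 (negbTE w_neq1).
Qed.

Section Unimodular.
Variable C : numClosedFieldType.

Lemma unimodular_neq0 (z : C) : z * z^* = 1 -> z != 0.
Proof. by apply: contra_eq_neq => ->; rewrite mul0r eq_sym oner_neq0. Qed.

Lemma unimodular_exprB (z : C) n m :
  z * z^* = 1 -> z ^+ n = 1 -> (m <= n)%N -> z ^+ (n - m) = z^* ^+ m.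
Proof.
move=> zJ zn1 le_mn; apply: (@mulIf _ (z ^+ m)); first exact/expf_neq0/unimodular_neq0.
by rewrite -exprD subnK // zn1 -exprMn mulrC zJ expr1n.
Qed.

End Unimodular.

Section ComplexExponential.
Variable R : realType.

Lemma expj0 : expj (0 : R) = 1.
Proof. by rewrite /expj cos0 sin0. Qed.

Lemma expjD (x y : R) : expj (x + y) = expj x * expj y.
Proof. by rewrite /expj cosD sinD /=; congr (_ +i* _)%C; ring. Qed.

Lemma expjN (x : R) : expj (- x) = (expj x)^*.
Proof. by rewrite /expj cosN sinN. Qed.

Lemma expj_mulJ (x : R) : expj x * (expj x)^* = 1.
Proof. by rewrite -expjN -expjD subrr expj0. Qed.

Lemma expjMn (x : R) n : expj (x * n%:R) = expj x ^+ n.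
Proof.
elim: n => [|n IHn]; first by rewrite mulr0 expj0.
by rewrite mulrS mulrDr mulr1 expjD IHn exprS.
Qed.

Lemma expj2pi : expj (2 * pi : R) = 1.
Proof. by rewrite /expj mulr_natl cos2pi sin2pi. Qed.

Lemma expj_neq1 (y : R) : 0 < y < 2 * pi -> expj y != 1.
Proof.
case/andP=> y_gt0 y_lt; apply/eqP => -[cos_y1 _].
have sin_gt0 : 0 < sin (y / 2) by apply: sin_gt0_pi; apply/andP; split; lra.
have : cos y = 1 - (sin (y / 2)) ^+ 2 *+ 2.
  by rewrite {1}(splitr y) -mulr2n cos_mulr2n cos2sin2; ring.
rewrite cos_y1; nra.
Qed.

Lemma norm_expj (x : R) : `|expj x| = 1.
Proof. by apply/eqP; rewrite -sqrp_eq1 ?normr_ge0 // normCK expj_mulJ. Qed.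

End ComplexExponential.

Section ComplexMatrices.
Variable R : realType.

Lemma cconjE m n (A : 'M[R[i]]_(m, n)) i j : cconj A i j = (A i j)^*.
Proof. by rewrite mxE. Qed.

Lemma cconjM m n p (A : 'M[R[i]]_(m, n)) (B : 'M[R[i]]_(n, p)) :
  cconj (A *m B) = cconj A *m cconj B.
Proof. exact: map_mxM. Qed.

Lemma cconjK m n (A : 'M[R[i]]_(m, n)) : cconj (cconj A) = A.
Proof. by apply/matrixP => i j; rewrite !cconjE conjCK. Qed.

Lemma cconj_tr m n (A : 'M[R[i]]_(m, n)) : cconj A^T = (cconj A)^T.
Proof. by apply/matrixP => i j; rewrite !mxE. Qed.

(* The norm of [R[i]] takes values in [R[i]]; [sqnorm z] is the real number |z|^2. *)
Definition sqnorm (z : R[i]) : R := complex.Re (z * z^*).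

Lemma sqnorm_mulJ (z : R[i]) : z * z^* = (sqnorm z)%:C%C.
Proof. by rewrite RRe_real // ger0_real // mul_conjC_ge0. Qed.

Lemma sqnormE (z : R[i]) : (sqnorm z)%:C%C = `|z| ^+ 2.
Proof. by rewrite -sqnorm_mulJ normCK. Qed.

Lemma sqnorm_ge0 (z : R[i]) : 0 <= sqnorm z.
Proof. by rewrite -ler0c sqnormE exprn_ge0. Qed.

Lemma sqnorm_gt0 (z : R[i]) : z != 0 -> 0 < sqnorm z.
Proof. by move=> z_neq0; rewrite -ltcR sqnormE exprn_gt0 // normr_gt0. Qed.

Lemma sqnorm_natr n : sqnorm (n%:R : R[i]) = n%:R ^+ 2.
Proof. by apply: (@complexI R); rewrite sqnormE normr_nat rmorphXn rmorph_nat. Qed.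

End ComplexMatrices.

Lemma mulmx_diag_form (R : pzRingType) n (d : 'I_n -> R)
    {u c : 'cV[R]_n} {A B : 'M[R]_n} :
  (forall a b, (A *m B) a b = (a == b)%:R * d a) ->
  (u^T *m A *m B *m c) 0 0 = \sum_a u a 0 * d a * c a 0.
Proof.
move=> ABE; rewrite -(mulmxA _ A) mxE; apply: eq_bigr => a _; congr (_ * _).
rewrite mxE (bigD1 a) //= big1 => [|b /negbTE ba].
  by rewrite mxE ABE eqxx mul1r addr0.
by rewrite mxE ABE ba mul0r mulr0.
Qed.

Section DFT.
Variables (R : realType) (N : nat).
Hypothesis N_gt0 : (0 < N)%N.

Definition dft_root : R[i] := expj (- (2 * pi / N%:R)).
Local Notation om := dft_root.

Lemma dft_rootXE m : om ^+ m = (expj (2 * pi * m%:R / N%:R))^*.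
Proof. by rewrite /dft_root -expjMn -expjN mulNr mulrAC. Qed.

Lemma dft_rootX_mulJ m : om ^+ m * (om ^+ m)^* = 1.
Proof. by rewrite dft_rootXE conjCK mulrC expj_mulJ. Qed.

Lemma dft_root_prim : N.-primitive_root om.
Proof.
apply/andP; split=> //; apply/forallP => i; rewrite unity_rootE dft_rootXE.
have [iN|iN] := eqVneq i.+1 N.
  by rewrite iN mulfK ?pnatr_eq0 -?lt0n // expj2pi conjC1 !eqxx.
rewrite eqbF_neg -[X in _ == X]conjC1 (inj_eq (can_inj conjCK)); apply: expj_neq1.
have i_lt : (i.+1 < N)%N by rewrite ltn_neqAle iN ltn_ord.
have pi2_gt0 : 0 < 2 * pi :> R by rewrite mulr_gt0 ?pi_gt0.
apply/andP; split; first by rewrite divr_gt0 ?mulr_gt0 ?ltr0n ?pi_gt0.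
by rewrite ltr_pdivrMr ?ltr0n // ltr_pM2l // ltr_nat.
Qed.

Lemma dft_rootX_unity m : (om ^+ m) ^+ N = 1.
Proof. by rewrite exprAC (prim_expr_order dft_root_prim) expr1n. Qed.

Lemma dft_orthogonality (a b : 'I_N) :
  \sum_(n < N) ((om ^+ a)^* * om ^+ b) ^+ n = (a == b)%:R * N%:R.
Proof.
rewrite sum_unity_root_expr; last first.
  by rewrite exprMn -rmorphXn !dft_rootX_unity rmorph1 mulr1.
rewrite -(inj_eq (mulfI (unimodular_neq0 (dft_rootX_mulJ a)))) mulrA dft_rootX_mulJ mul1r mulr1.
rewrite (eq_prim_root_expr dft_root_prim) !modn_small // eq_sym.
by rewrite -val_eqE /=; case: eqP => _; rewrite ?mul1r ?mul0r.
Qed.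

Local Notation dft_scale := ((Num.sqrt (N%:R : R))^-1)%:C%C.

Lemma Fmat_entry (k a n : 'I_N) :
  Fmat R k a n = dft_scale * (om ^+ a) ^+ n * (om ^+ a)^* ^+ k.
Proof.
rewrite !mxE /dft_entry /cidx -[RHS]mulrA; congr (_ * _).
rewrite expjN -dft_rootXE exprM (expr_mod _ (dft_rootX_unity a)).
have le_kN : (k <= N)%N by exact: ltnW.
by rewrite -addnBA // exprD (unimodular_exprB (dft_rootX_mulJ a) (dft_rootX_unity a)).
Qed.

Lemma dft_scale_sqr : dft_scale * dft_scale * N%:R = 1.
Proof.
rewrite -(rmorph_nat (real_complex R)) -!rmorphM -invfM -expr2 sqr_sqrtr ?ler0n //.
by rewrite mulVf ?pnatr_eq0 -?lt0n.
Qed.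

Lemma combiner_entry (k1 k2 a b : 'I_N) :
  (cconj (Fmat R k1) *m (Fmat R k2)^T) a b =
  (a == b)%:R * ((om ^+ a) ^+ k1 * (om ^+ a)^* ^+ k2).
Proof.
have scaleJ : dft_scale^* = dft_scale := conjc_real _.
have term n : cconj (Fmat R k1) a n * (Fmat R k2)^T n b =
    dft_scale * dft_scale * ((om ^+ a) ^+ k1 * (om ^+ b)^* ^+ k2) *
    ((om ^+ a)^* * om ^+ b) ^+ n.
  rewrite cconjE [_^T _ _]mxE !Fmat_entry; set A := om ^+ a; set B := om ^+ b.
  rewrite !rmorphM !rmorphXn /= conjCK scaleJ exprMn; ring.
rewrite mxE (eq_bigr _ (fun n _ => term n)) -mulr_sumr dft_orthogonality.
have [<-|_] := eqVneq a b; last by rewrite !mul0r mulr0.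
by rewrite !mul1r mulrAC dft_scale_sqr mul1r.
Qed.

Lemma combiner_id (k : 'I_N) : cconj (Fmat R k) *m (Fmat R k)^T = 1%:M.
Proof.
apply/matrixP => a b; rewrite combiner_entry mxE -exprMn dft_rootX_mulJ expr1n.
by rewrite mulr1.
Qed.

End DFT.

Section Combiner.
Variables (R : realType) (N : nat) (k : 'I_N).
Hypothesis N_gt0 : (0 < N)%N.
Local Notation om := (dft_root R N).

Lemma gval_combined (h hk : 'cV[R[i]]_N) :
  gval k h hk = \sum_a htil h a 0 * cconj hk a 0.
Proof.
rewrite /gval (mulmx_diag_form (d := fun=> 1)) => [|a b].
  by apply: eq_bigr => a _; rewrite mulr1.
by rewrite combiner_id // mxE mulr1.
Qed.

Lemma vval_combined (h hk : 'cV[R[i]]_N) (k' : 'I_N) :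
  vval k h hk k' =
  \sum_a htil h a 0 * ((om ^+ a) ^+ k * (om ^+ a)^* ^+ k') * cconj hk a 0.
Proof. exact/mulmx_diag_form/combiner_entry. Qed.

Lemma noise_combined (h : 'cV[R[i]]_N) (s : R) :
  (wrow k h *m (s%:C%C)%:M *m (cconj (wrow k h))^T) 0 0 =
  s%:C%C * \sum_a htil h a 0 * (htil h a 0)^*.
Proof.
rewrite mul_mx_scalar -scalemxAl mxE; congr (_ * _).
rewrite /wrow cconjM cconjK trmx_mul -cconj_tr trmxK !mulmxA.
rewrite (mulmx_diag_form (d := fun=> 1)) => [|a b].
  by apply: eq_bigr => a _; rewrite mulr1 cconjE.
by rewrite combiner_id // mxE mulr1.
Qed.

End Combiner.

Section SignalPowers.
Variables (R : realType) (N : nat) (k : 'I_N) (pt : R).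
Hypothesis N_gt0 : (0 < N)%N.

Lemma powP_white (h hk : 'cV[R[i]]_N) :
  powP k pt 1%:M h hk = pt / N%:R * sqnorm (gval k h hk).
Proof. by rewrite /powP mxE eqxx mulr1 sqnorm_mulJ -rmorphM. Qed.

Lemma powI_white (s : R) (h hk : 'cV[R[i]]_N) :
  powI k pt 1%:M (s%:C%C)%:M h hk =
  pt / N%:R * \sum_(k' < N | k' != k) sqnorm (vval k h hk k') +
  s * \sum_a sqnorm (htil h a 0).
Proof.
rewrite /powI noise_combined //.
have -> : \sum_(k1 < N | k1 != k) \sum_(k2 < N | k2 != k)
    vval k h hk k1 * (1%:M : 'M[R[i]]_N) k1 k2 * (vval k h hk k2)^* =
    (\sum_(k' < N | k' != k) sqnorm (vval k h hk k'))%:C%C.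
  rewrite rmorph_sum; apply: eq_bigr => k1 k1_neq.
  rewrite (bigD1 k1) //= mxE eqxx mulr1 sqnorm_mulJ big1 ?addr0 // => k2 /andP[_ k21].
  by rewrite mxE eq_sym (negbTE k21) mulr0 mul0r.
have -> : \sum_a htil h a 0 * (htil h a 0)^* = (\sum_a sqnorm (htil h a 0))%:C%C.
  by rewrite rmorph_sum; apply: eq_bigr => a _; rewrite sqnorm_mulJ.
by rewrite -!rmorphM -rmorphD.
Qed.

End SignalPowers.

Section LineOfSight.
Variables (R : realType) (N : nat).
Hypothesis N_gt0 : (0 < N)%N.

Definition steer_dot (phi th : R) : R[i] :=
  \sum_(a < N) steer N phi a 0 * (steer N th a 0)^*.

Lemma steer_mulJ (th : R) (a : 'I_N) : steer N th a 0 * (steer N th a 0)^* = 1.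
Proof. by rewrite mxE expj_mulJ. Qed.

Lemma norm_steer (th : R) (a : 'I_N) : `|steer N th a 0| = 1.
Proof. by rewrite mxE norm_expj. Qed.

Lemma steer_entry0 (th : R) : steer N th (Ordinal N_gt0) 0 = 1.
Proof. by rewrite mxE mulr0 mul0r expj0. Qed.

Lemma steer_dotii (th : R) : steer_dot th th = N%:R.
Proof.
by rewrite /steer_dot (eq_bigr _ (fun a _ => steer_mulJ th a)) sumr_const card_ord.
Qed.

Lemma norm_steer_dot_le (phi th : R) : `|steer_dot phi th| <= N%:R.
Proof.
apply: le_trans (ler_norm_sum _ _ _) _.
by under eq_bigr do rewrite normrM norm_conjC !norm_steer mulr1; rewrite sumr_const card_ord.
Qed.

Lemma norm_steer_dot_eq (phi th : R) :
  `|steer_dot phi th| = N%:R -> steer N phi = steer N th.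
Proof.
move=> dotN.
have entry_norm (a : 'I_N) : `|steer N phi a 0 * (steer N th a 0)^*| = 1.
  by rewrite normrM norm_conjC !norm_steer mulr1.
have norm_sum : `|steer_dot phi th| = \sum_(a < N) `|steer N phi a 0 * (steer N th a 0)^*|.
  by rewrite dotN (eq_bigr _ (fun a _ => entry_norm a)) sumr_const card_ord.
have [t _ entry_t] := normC_sum_eq1 norm_sum (fun a _ => entry_norm a).
have t1 : t = 1 by rewrite -(entry_t (Ordinal N_gt0)) // !steer_entry0 conjC1 mulr1.
apply/matrixP => a j; rewrite (ord1 j).
have := entry_t a isT; rewrite t1 => entry_a.
by rewrite -[LHS]mulr1 -(steer_mulJ th a) mulrCA entry_a mulr1.
Qed.

Variables (alpha : R[i]) (k : 'I_N).
Hypothesis alpha_neq0 : alpha != 0.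
Local Notation los th := (alpha *: steer N th).

Lemma htil_los (th : R) (a : 'I_N) : htil (los th) a 0 = (alpha^*)^-1 * steer N th a 0.
Proof.
rewrite mxE [los th a 0]mxE rmorphM invfM; congr (_ * _).
by apply: mulr1_eq; rewrite mulrC steer_mulJ.
Qed.

Lemma htil_los_mulJ (phi th : R) (a : 'I_N) :
  htil (los phi) a 0 * cconj (los th) a 0 = steer N phi a 0 * (steer N th a 0)^*.
Proof.
rewrite htil_los cconjE [los th a 0]mxE rmorphM mulrACA.
by rewrite mulVf ?mul1r // conjC_eq0.
Qed.

Lemma gval_los (phi th : R) : gval k (los phi) (los th) = steer_dot phi th.
Proof.
by rewrite gval_combined //; apply: eq_bigr => a _; rewrite htil_los_mulJ.
Qed.

Lemma vval_los_aligned (th : R) (k' : 'I_N) : k' != k -> vval k (los th) (los th) k' = 0.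
Proof.
move=> k'_neq_k; rewrite vval_combined //.
have term (a : 'I_N) : htil (los th) a 0 *
    ((dft_root R N ^+ a) ^+ k * (dft_root R N ^+ a)^* ^+ k') * cconj (los th) a 0 =
    ((dft_root R N ^+ k')^* * dft_root R N ^+ k) ^+ a.
  rewrite mulrAC htil_los_mulJ steer_mulJ mul1r exprMn mulrC.
  by rewrite -!rmorphXn (exprAC _ a k') (exprAC _ a k).
by rewrite (eq_bigr _ (fun a _ => term a)) dft_orthogonality // (negbTE k'_neq_k) mul0r.
Qed.

Lemma noise_los (phi : R) :
  \sum_a sqnorm (htil (los phi) a 0) = N%:R / sqnorm alpha.
Proof.
have entry (a : 'I_N) : sqnorm (htil (los phi) a 0) = (sqnorm alpha)^-1.
  apply: (@complexI R); rewrite -sqnorm_mulJ fmorphV /= -sqnorm_mulJ htil_los.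
  rewrite rmorphM fmorphV /= conjCK mulrACA steer_mulJ mulr1 -invfM.
  by rewrite mulrC.
by rewrite (eq_bigr _ (fun a _ => entry a)) sumr_const card_ord mulr_natl.
Qed.

End LineOfSight.

Section LineOfSightSINR.
Variables (R : realType) (N : nat) (k : 'I_N) (pt sigma2 : R) (alpha : R[i]).
Hypotheses (N_gt0 : (0 < N)%N) (pt_gt0 : 0 < pt) (sigma2_gt0 : 0 < sigma2).
Hypothesis alpha_neq0 : alpha != 0.
Local Notation los th := (alpha *: steer N th).
Local Notation gain := (pt / N%:R).
Local Notation noise := (sigma2 * (N%:R / sqnorm alpha)).

Lemma sinr_los (phi th : R) :
  sinr k pt sigma2 (los phi) (los th) =
  gain * sqnorm (steer_dot N phi th) /
  (gain * \sum_(k' < N | k' != k) sqnorm (vval k (los phi) (los th) k') + noise).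
Proof. by rewrite /sinr powP_white powI_white // noise_los gval_los. Qed.

Lemma sinr_los_aligned (th : R) :
  sinr k pt sigma2 (los th) (los th) = gain * N%:R ^+ 2 / (gain * 0 + noise).
Proof.
rewrite sinr_los steer_dotii sqnorm_natr; congr (_ / (_ * _ + _)).
by apply: big1 => k' k'_neq_k; rewrite vval_los_aligned // /sqnorm mul0r.
Qed.

Lemma sqnorm_steer_dot_le (phi th : R) : sqnorm (steer_dot N phi th) <= N%:R ^+ 2.
Proof.
rewrite -lecR sqnormE rmorphXn rmorph_nat.
by rewrite ler_pXn2r ?nnegrE ?normr_ge0 ?ler0n // norm_steer_dot_le.
Qed.

Lemma gain_gt0 : 0 < gain.
Proof. by rewrite divr_gt0 ?ltr0n. Qed.

Lemma noise_gt0 : 0 < noise.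
Proof. by rewrite mulr_gt0 ?divr_gt0 ?sqnorm_gt0 ?ltr0n. Qed.

Lemma interference_ge0 (phi th : R) :
  0 <= \sum_(k' < N | k' != k) sqnorm (vval k (los phi) (los th) k').
Proof. by apply: sumr_ge0 => k' _; apply: sqnorm_ge0. Qed.

Lemma sinr_los_le_aligned (phi th : R) :
  sinr k pt sigma2 (los phi) (los th) <= sinr k pt sigma2 (los th) (los th).
Proof.
rewrite sinr_los sinr_los_aligned mulr0 add0r.
apply: ratio_le_max; rewrite ?gain_gt0 ?noise_gt0 ?interference_ge0 //.
  exact: sqnorm_steer_dot_le.
by rewrite exprn_ge0 ?ler0n.
Qed.

Lemma sinr_los_max_steer (phi th : R) :
  sinr k pt sigma2 (los th) (los th) <= sinr k pt sigma2 (los phi) (los th) ->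
  steer N phi = steer N th.
Proof.
rewrite sinr_los_aligned sinr_los mulr0 add0r => le_aligned.
apply: (norm_steer_dot_eq N_gt0); apply/eqP.
rewrite -(eqrXn2 (n := 2)) ?normr_ge0 ?ler0n // -sqnormE.
rewrite -(rmorph_nat (real_complex R)) -rmorphXn (inj_eq (@complexI R)); apply/eqP.
apply: ratio_eq_max le_aligned; rewrite ?gain_gt0 ?noise_gt0 ?interference_ge0 //.
  exact: sqnorm_steer_dot_le.
by rewrite exprn_ge0 ?ler0n.
Qed.

End LineOfSightSINR.

Lemma steer_principal_angle (R : realType) N (th : R) : 0 <= th < 2 * pi ->
  exists2 phi, - pi <= phi < pi & steer N phi = steer N th.
Proof.
case/andP=> th_ge0 th_lt; have pi_gt0 : 0 < pi :> R := pi_gt0 R.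
have [th_ltpi|th_gepi] := ltrP th pi.
  by exists th => //; apply/andP; split; lra.
exists (th - 2 * pi); first by apply/andP; split; lra.
apply/matrixP => a j; rewrite !mxE; congr (expj (_ * _)).
by rewrite -(sinD2pi (th - 2 * pi)) mulr_natl subrK.
Qed.

Theorem lemma3 (R : realType) (N : nat) (k : 'I_N) (pt sigma2 : R)
    (alpha : R[i]) (thk : R) :
  (2 <= N)%N -> 0 < pt -> 0 < sigma2 -> alpha != 0 ->
  0 <= thk < 2 * pi ->
  let hk : 'cV[R[i]]_N := alpha *: steer N thk in
  let gam (phi : R) : R := sinr k pt sigma2 (alpha *: steer N phi) hk in
  (exists phi : R, - pi <= phi < pi /\
      (forall psi : R, - pi <= psi < pi -> gam psi <= gam phi)) /\
  (forall phis : R, - pi <= phis < pi ->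
      (forall psi : R, - pi <= psi < pi -> gam psi <= gam phis) ->
      steer N phis = steer N thk).
Proof.
move=> N_ge2 pt_gt0 sigma2_gt0 alpha_neq0 thk_range hk gam.
have N_gt0 : (0 < N)%N by exact: leq_trans N_ge2.
have [phi0 phi0_range steer_phi0] := steer_principal_angle N thk_range.
have gam_phi0 : gam phi0 = sinr k pt sigma2 hk hk by rewrite /gam steer_phi0.
have gam_le psi : gam psi <= gam phi0.
  rewrite gam_phi0 /gam /hk.
  exact: (sinr_los_le_aligned k N_gt0 pt_gt0 sigma2_gt0 alpha_neq0).
split; first by exists phi0; split=> // psi _; apply: gam_le.
move=> phis _ phis_max.
apply: (sinr_los_max_steer (k := k) N_gt0 pt_gt0 sigma2_gt0 alpha_neq0).
by move: (phis_max phi0 phi0_range); rewrite gam_phi0 /gam /hk.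
Qed.
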